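(* Let $n,t$ be nonnegative integers with $n\ge 3t+1$, let $\mathcal S_1=\{1,\dots,n\}$ be the set of all nodes, and let $\mathcal F\subseteq \mathcal S_1$ be the set of dishonest nodes with $|\mathcal F|\le t$. Define a family of sets $(\mathcal S_g)_{g\ge 1}$ recursively: for each $g\ge1$, $\mathcal S_g$ is partitioned into two disjoint sets $\mathcal S_{2g}$ and $\mathcal S_{2g+1}$ with $\mathcal S_g=\mathcal S_{2g}\cup\mathcal S_{2g+1}$, $|\mathcal S_{2g}|=\lfloor|\mathcal S_g|/2\rfloor$ and $|\mathcal S_{2g+1}|=\lceil|\mathcal S_g|/2\rceil$ (the choice of partition is arbitrary subject to these sizes). Then there exists a network chain with good resilience: an infinite sequence of indices $g_1=1,g_2,g_3,\dots$ with $g_{r+1}\in\{2g_r,\,2g_r+1\}$ for all $r\ge1$ such that every $\mathcal S_{g_r}$ has good resilience, i.e. $|\mathcal S_{g_r}\cap\mathcal F|<|\mathcal S_{g_r}|/3$ for all $r\ge 1$. *)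

From mathcomp Require Import all_boot.
Set Implicit Arguments.
Unset Strict Implicit.
Unset Printing Implicit Defensive.

(* Nodes are represented by 'I_n (i.e. 0..n-1 instead of 1..n). *)

(* S_g has good resilience: |S_g ∩ F| < |S_g| / 3, stated over nat as
   3 * |S_g ∩ F| < |S_g| (equivalent over the rationals). *)
Definition good_resilience (n : nat) (F A : {set 'I_n}) : bool :=
  3 * #|A :&: F| < #|A|.

Definition halving_family (n : nat) (S : nat -> {set 'I_n}) : Prop :=
  S 1 = [set: 'I_n] /\
  forall g, 1 <= g ->
    [/\ S (2 * g) :&: S (2 * g + 1) = set0,
        S g = S (2 * g) :|: S (2 * g + 1),
        #|S (2 * g)| = #|S g| %/ 2
      & #|S (2 * g + 1)| = (#|S g|).+1 %/ 2].

From mathcomp Require Import all_boot.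
From mathcomp Require Import zify.

Set Implicit Arguments.
Unset Strict Implicit.
Unset Printing Implicit Defensive.

(* Resilience is inherited by one of the two halves of any disjoint split:
   if both halves had at least a third of their nodes dishonest, so would
   their union.  Starting from the whole network, which is good because
   [3 |F| <= 3 t < n], one can therefore always descend into a good child. *)

Section Resilience.

Variables (n : nat) (F : {set 'I_n}).

Lemma card_setIUl_disjoint (A B C : {set 'I_n}) :
  A :&: B = set0 -> #|(A :|: B) :&: C| = #|A :&: C| + #|B :&: C|.
Proof.
by move=> AB0; rewrite setIUl cardsU setIACA setIid AB0 set0I cards0 subn0.
Qed.

Lemma good_resilienceT : 3 * #|F| < n -> good_resilience F [set: 'I_n].
Proof. by rewrite /good_resilience setTI cardsT card_ord. Qed.

Lemma good_resilienceU (A B : {set 'I_n}) :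
  A :&: B = set0 -> good_resilience F (A :|: B) ->
  good_resilience F A \/ good_resilience F B.
Proof.
move=> AB0; rewrite /good_resilience card_setIUl_disjoint //.
have := card_setIUl_disjoint [set: 'I_n] AB0; rewrite !setIT => ->.
have [goodA | badA] := ltnP (3 * #|A :&: F|) #|A|; first by left.
have [goodB | badB] := ltnP (3 * #|B :&: F|) #|B|; first by right.
lia.
Qed.

Variable S : nat -> {set 'I_n}.
Hypothesis S_halving : halving_family S.

Definition good_child (g : nat) : nat :=
  if good_resilience F (S (2 * g)) then 2 * g else 2 * g + 1.

Lemma good_childP g : 1 <= g -> good_resilience F (S g) ->
  1 <= good_child g /\ good_resilience F (S (good_child g)).
Proof.
move=> g_ge1 goodSg; have [SI0 SU _ _] := S_halving.2 g g_ge1.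
rewrite /good_child; case: ifP => [goodL | badL].
  by split; first by rewrite muln_gt0.
split; first by rewrite addn1.
rewrite SU in goodSg.
by have [goodL|//] := good_resilienceU SI0 goodSg; rewrite goodL in badL.
Qed.

End Resilience.

Theorem mainTheorem2 (n t : nat) (F : {set 'I_n}) (S : nat -> {set 'I_n}) :
  3 * t + 1 <= n ->
  #|F| <= t ->
  halving_family S ->
  exists gs : nat -> nat,
    [/\ gs 0 = 1,
        (forall r, gs r.+1 = 2 * gs r \/ gs r.+1 = 2 * gs r + 1)
      & forall r, good_resilience F (S (gs r))].
Proof.
move=> tn Ft S_halving; set gs := fun r => iter r (good_child F S) 1.
have chain_good r : 1 <= gs r /\ good_resilience F (S (gs r)).
  elim: r => [|r [gs_ge1 good_gs]]; last exact: good_childP.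
  by split=> //; rewrite S_halving.1; apply: good_resilienceT; lia.
exists gs; split=> // [r|r]; last exact: (chain_good r).2.
by rewrite /= /good_child; case: ifP; [left | right].
Qed.
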